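(* For $n=1,2,\dots$ let $\Phi_{W^{(n)}}$ be a source pmf on countable $\mathcal W^{(n)}$, $\Phi_{U^{(n)}|W^{(n)}}$ a codebook distribution on countable $\mathcal U^{(n)}$, and $\Phi_{V^{(n)}|W^{(n)},U^{(n)}}$ a channel to countable $\mathcal V^{(n)}$. Let $\mathcal B^{(n)}=\{u^{(n)}(w)\}_{w\in\mathcal W^{(n)}}$ have independent entries with $u^{(n)}(w)\sim\Phi_{U^{(n)}|W^{(n)}=w}$, let $P_{V^{(n)}}(v)=\sum_w\Phi_{W^{(n)}}(w)\Phi_{V^{(n)}|W^{(n)},U^{(n)}}(v|w,u^{(n)}(w))$, and let $Q_{V^{(n)}}=\Phi_{V^{(n)}}$ be the $V^{(n)}$-marginal of $\Phi_{W^{(n)}}\Phi_{U^{(n)}|W^{(n)}}\Phi_{V^{(n)}|W^{(n)},U^{(n)}}$. If for every $\tau\in\mathbb R$, $\mathbf P_\Phi\big(i_\Phi(W^{(n)},U^{(n)};V^{(n)})-i_\Phi(W^{(n)})>\tau\big)\to0$ as $n\to\infty$, then $\lim_{n\to\infty}\mathbf E\|P_{V^{(n)}}-Q_{V^{(n)}}\|_{TV}=0$.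
   Context: Expectation is over the random codebook. $i_\Phi(w,u;v)=\log\frac{\Phi_{V|W,U}(v|w,u)}{\Phi_V(v)}$ and $i_\Phi(w)=\log\frac1{\Phi_W(w)}$, base 2. Total variation is half the $\ell_1$ distance. *)

From HB Require Import structures.
From mathcomp Require Import all_boot all_order all_algebra.
From mathcomp Require Import all_classical all_reals all_analysis.
Set Implicit Arguments. Unset Strict Implicit. Unset Printing Implicit Defensive.
Import Order.TTheory GRing.Theory Num.Theory.
Local Open Scope classical_set_scope.
Local Open Scope ring_scope.

Section Defs.
Variable R : realType.

Definition is_pmf (T : countType) (p : T -> R) : Prop :=
  (forall t, 0 <= p t) /\ (\esum_(t in [set: T]) (p t)%:E = 1)%E.

Definition log2 (x : R) : R := ln x / ln 2.

Variables (W U V : countType).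
Variables (PhiW : W -> R) (PhiU : W -> U -> R) (PhiV : W -> U -> V -> R).

Definition joint (x : (W * U) * V) : R :=
  PhiW x.1.1 * PhiU x.1.1 x.1.2 * PhiV x.1.1 x.1.2 x.2.

Definition PhiVmarg (v : V) : R :=
  fine (\esum_(x in [set: W * U]) (PhiW x.1 * PhiU x.1 x.2 * PhiV x.1 x.2 v)%:E).

Definition info_WU_V (w : W) (u : U) (v : V) : R :=
  log2 (PhiV w u v / PhiVmarg v).

Definition info_W (w : W) : R := log2 (1 / PhiW w).

Definition prob_info_gt (tau : R) : \bar R :=
  \esum_(x in [set x : (W * U) * V | 0 < joint x /\
          info_WU_V x.1.1 x.1.2 x.2 - info_W x.1.1 > tau]) (joint x)%:E.

Definition PV_code (c : W -> U) (v : V) : R :=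
  fine (\esum_(w in [set: W]) (PhiW w * PhiV w (c w) v)%:E).

Definition tv_dist (P Q : V -> R) : \bar R :=
  ((2%:R)^-1)%:E * \esum_(v in [set: V]) (`|P v - Q v|)%:E.

(* A random codebook on (Omega, Pr): each entry u w is a discrete random variable,
   the entries are mutually independent and u w ~ PhiU w. *)
Definition random_codebook (d : measure_display) (Omega : measurableType d)
    (Pr : probability Omega R) (u : W -> Omega -> U) : Prop :=
  (forall w a, measurable [set om | u w om = a]) /\
  (forall (s : seq W), uniq s -> forall a : W -> U,
      Pr [set om | forall w, w \in s -> u w om = a w]
      = (\prod_(w <- s) PhiU w (a w))%:E).

End Defs.

From HB Require Import structures.
From mathcomp Require Import all_boot all_order all_algebra.
From mathcomp Require Import all_classical all_reals all_analysis.
From mathcomp Require Import measurable_realfun.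
From mathcomp Require Import ring lra.
Set Implicit Arguments. Unset Strict Implicit. Unset Printing Implicit Defensive.
Import Order.TTheory GRing.Theory Num.Theory.
Local Open Scope classical_set_scope.
Local Open Scope ring_scope.

(* Split the contribution PhiW(w) PhiV(v|w,u(w)) of each codeword to the output
   distribution into a typical part (at most g q(v)) and an atypical part.
   Summed over v, the atypical part has expectation P(i(W,U;V) - i(W) > log2 g),
   which vanishes.  The typical part is a sum of independent terms bounded by
   g q(v), so its variance is at most g q(v) times its mean, and the inequality
   |t| <= k + t^2/(4k) bounds its expected deviation by (k + g/(4k)) q(v).
   Hence E TV <= P(i(W,U;V) - i(W) > log2 g) + (k + g/(4k))/2, which is small
   for g = eta^2/2 and k = eta/2. *)

Section countable_esum.
Local Open Scope ereal_scope.
Context {R : realType}.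

Definition pickle_seq {T : countType} (a : T -> \bar R) (k : nat) : \bar R :=
  if pickle_inv k is Some t then a t else 0.

Lemma pickle_seq_ge0 (T : countType) (a : T -> \bar R) :
  (forall t, 0 <= a t) -> forall k, 0 <= pickle_seq a k.
Proof. by move=> a0 k; rewrite /pickle_seq; case: pickle_inv. Qed.

Lemma esum_pickle_seq (T : countType) (a : T -> \bar R) : (forall t, 0 <= a t) ->
  \esum_(t in [set: T]) a t = \sum_(k <oo) pickle_seq a k.
Proof.
move=> a0; rewrite nneseries_esumT; last exact: pickle_seq_ge0.
rewrite (esumID (range (@pickle T))) => [|k _]; last exact: pickle_seq_ge0.
rewrite [X in _ + X]esum1 ?adde0; last first.
  move=> k [_ /= nk]; rewrite /pickle_seq; have := @pickle_invK T k.
  by case: pickle_inv => [t /= tk|//]; exfalso; apply: nk; exists t.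
rewrite setTI esum_image; last by move=> x y _ _; exact: (pcan_inj (@pickleK T)).
by apply: eq_esum => t _; rewrite /pickle_seq pickleK_inv.
Qed.

Lemma esumZl (T : countType) (c : R) (a : T -> \bar R) : (0 <= c)%R ->
  (forall t, 0 <= a t) ->
  \esum_(t in [set: T]) (c%:E * a t) = c%:E * \esum_(t in [set: T]) a t.
Proof.
move=> c0 a0; rewrite !esum_pickle_seq // => [|t]; last by rewrite mule_ge0.
rewrite -nneseriesZl => [|k _]; last exact: pickle_seq_ge0.
by apply: eq_eseriesr => k _; rewrite /pickle_seq; case: pickle_inv; rewrite ?mule0.
Qed.

Lemma esum_single (T : choiceType) (a : T -> \bar R) (t0 : T) :
  (forall t, t <> t0 -> a t = 0) -> 0 <= a t0 ->
  \esum_(t in [set: T]) a t = a t0.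
Proof.
move=> a0 at0; rewrite (esumID [set t0]) => [|t _]; last first.
  by have [->//|/eqP/a0 ->] := eqVneq t t0.
by rewrite setTI esum_set1 // esum1 ?adde0 // => t [_ /a0].
Qed.

Lemma le_term_esum (T : choiceType) (a : T -> \bar R) t : (forall t, 0 <= a t) ->
  a t <= \esum_(t in [set: T]) a t.
Proof.
move=> a0; apply: esum_ge; exists [set t]; first by split; [exact: finite_set1|].
by rewrite fsbig_set1.
Qed.

Lemma fin_num_le (x y : \bar R) : 0 <= x -> x <= y -> y \is a fin_num ->
  x \is a fin_num.
Proof.
by move=> x0 xy; rewrite !ge0_fin_numE // ?(le_trans x0 xy) // => /(le_lt_trans xy).
Qed.

Lemma esumT_pair (T1 T2 : choiceType) (f : T1 * T2 -> \bar R) :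
  (forall p, 0 <= f p) ->
  \esum_(p in [set: T1 * T2]) f p =
  \esum_(i in [set: T1]) \esum_(j in [set: T2]) f (i, j).
Proof.
move=> f0; have -> : [set: T1 * T2] = [set: T1] `*`` (fun=> [set: T2]).
  by apply/seteqP; split.
by rewrite (esum_esum (a := fun i j => f (i, j))) //; apply: eq_esum => -[i j].
Qed.

Lemma exchange_esum (T1 T2 : choiceType) (f : T1 -> T2 -> \bar R) :
  (forall i j, 0 <= f i j) ->
  \esum_(i in [set: T1]) \esum_(j in [set: T2]) f i j =
  \esum_(j in [set: T2]) \esum_(i in [set: T1]) f i j.
Proof.
move=> f0; rewrite -(esumT_pair (f := fun p => f p.1 p.2)) //.
rewrite -(esumT_pair (f := fun p => f p.2 p.1)) //.
rewrite (reindex_esum [set: T2 * T1] [set: T1 * T2] (fun x => (x.2, x.1))) //.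
split=> [[]//|[? ?] [? ?] _ _ /= [-> ->]//|[i j] _]; by exists (j, i).
Qed.

Lemma esumM (T1 T2 : countType) (f : T1 -> R) (g : T2 -> R) :
  (forall a, 0 <= f a)%R -> (forall b, 0 <= g b)%R ->
  \esum_(b in [set: T2]) (g b)%:E \is a fin_num ->
  (\esum_(a in [set: T1]) (f a)%:E) * (\esum_(b in [set: T2]) (g b)%:E) =
  \esum_(a in [set: T1]) \esum_(b in [set: T2]) (f a * g b)%:E.
Proof.
move=> f0 g0 fin.
have S0 : (0 <= fine (\esum_(b in [set: T2]) (g b)%:E))%R.
  by rewrite fine_ge0 // esum_ge0 // => b _; rewrite lee_fin.
have f0E a : 0 <= (f a)%:E by rewrite lee_fin.
have g0E b : 0 <= (g b)%:E by rewrite lee_fin.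
rewrite -(fineK fin) muleC -esumZl //.
by apply: eq_esum => a _; rewrite muleC (fineK fin) -esumZl.
Qed.

Lemma esum_diag_prod (T : countType) (c : R) (m : T -> \bar R) :
  (0 <= c)%R -> (forall t, 0 <= m t) -> \esum_(t in [set: T]) m t \is a fin_num ->
  \esum_(i in [set: T]) \esum_(j in [set: T])
    ((if i == j then c%:E * m i else 0) + m i * m j) =
  c%:E * (\esum_(t in [set: T]) m t) +
  (\esum_(t in [set: T]) m t) * (\esum_(t in [set: T]) m t).
Proof.
move=> c0 m0 fin; set S := \esum_(t in _) m t.
have m_fin i : m i \is a fin_num.
  exact: fin_num_le (m0 i) (le_term_esum _ m0) fin.
transitivity (\esum_(i in [set: T]) (c%:E * m i + m i * S)).
  apply: eq_esum => i _; rewrite esumD; last 2 first.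
  - by move=> j _; case: eqP => _; rewrite ?mule_ge0 ?lee_fin.
  - by move=> j _; rewrite mule_ge0.
  rewrite (@esum_single _ _ i) ?eqxx ?mule_ge0 ?lee_fin //; last first.
    by move=> j /eqP; rewrite eq_sym => /negbTE ->.
  by rewrite -(fineK (m_fin i)) esumZl ?fine_ge0.
have S0 : 0 <= S by rewrite esum_ge0.
rewrite esumD; last 2 first.
- by move=> i _; rewrite mule_ge0 ?lee_fin.
- by move=> i _; rewrite mule_ge0.
rewrite esumZl //; congr (_ + _).
transitivity (\esum_(i in [set: T]) ((fine S)%:E * m i)).
  by apply: eq_esum => i _; rewrite muleC (fineK fin).
by rewrite esumZl ?fine_ge0 // (fineK fin).
Qed.

End countable_esum.

Section integral_esum.
Local Open Scope ereal_scope.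
Context {R : realType} d (Omega : measurableType d) (mu : {measure set Omega -> \bar R}).

Lemma measurable_fun_esum (T : countType) (f : T -> Omega -> \bar R) :
  (forall t, measurable_fun setT (f t)) -> (forall t x, 0 <= f t x) ->
  measurable_fun setT (fun x => \esum_(t in [set: T]) f t x).
Proof.
move=> mf f0; rewrite (_ : (fun x => _) =
    fun x => \sum_(k <oo | k \in predT) pickle_seq (f^~ x) k).
  apply: ge0_emeasurable_sum => [k x _ _|k _]; first exact: pickle_seq_ge0.
  by rewrite /pickle_seq; case: pickle_inv.
by apply/funext => x; rewrite esum_pickle_seq.
Qed.

Lemma integral_esum (T : countType) (f : T -> Omega -> \bar R) :
  (forall t, measurable_fun setT (f t)) -> (forall t x, 0 <= f t x) ->
  \int[mu]_x (\esum_(t in [set: T]) f t x)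
  = \esum_(t in [set: T]) \int[mu]_x (f t x).
Proof.
move=> mf f0; rewrite esum_pickle_seq => [|t]; last exact: integral_ge0.
under eq_integral do rewrite esum_pickle_seq //.
rewrite integral_nneseries //.
- by apply: eq_eseriesr => k _; rewrite /pickle_seq; case: pickle_inv; rewrite ?integral0.
- by move=> k; rewrite /pickle_seq; case: pickle_inv.
- by move=> k x _; exact: pickle_seq_ge0.
Qed.

Lemma measurable_fun_discrete d' (Y : measurableType d') (T : countType)
    (X : Omega -> T) (F : T -> Y) :
  (forall a, measurable [set om | X om = a]) ->
  measurable_fun setT (fun om => F (X om)).
Proof.
move=> mX _ B mB; rewrite setTI.
have -> : (fun om => F (X om)) @^-1` B = \bigcup_(k in [set: nat])
   (if pickle_inv k is Some a then [set om | X om = a] `&` [set _ | B (F a)]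
    else set0).
  apply/seteqP; split => [om /= Bom|om [k _]].
    by exists (pickle (X om)) => //; rewrite pickleK_inv.
  by case: pickle_inv => [a [/= <-]|//].
apply: bigcupT_measurable => k; case: pickle_inv => [a|//].
apply: measurableI; first exact: mX.
by have [h|h] := pselect (B (F a));
  [rewrite (_ : [set _ | _] = setT) | rewrite (_ : [set _ | _] = set0)];
  try by apply/seteqP; split.
Qed.

Lemma integral_discrete (T : countType) (X : Omega -> T) (F : T -> R) :
  (forall a, measurable [set om | X om = a]) -> (forall a, 0 <= F a)%R ->
  \int[mu]_om (F (X om))%:E = \esum_(a in [set: T]) (F a)%:E * mu [set om | X om = a].
Proof.
move=> mX F0.
have split_pt om : (F (X om))%:E = \esum_(a in [set: T])
    ((F a)%:E * (\1_[set om | X om = a] om)%:E).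
  rewrite (@esum_single _ _ _ (X om)) => [|a ha|]; last by rewrite mule_ge0 ?lee_fin.
    by rewrite indicE mem_set // mule1.
  by rewrite indicE memNset ?mule0 // => /esym.
under eq_integral do rewrite split_pt.
rewrite integral_esum => [|a|a om]; last by rewrite mule_ge0 ?lee_fin.
  apply: eq_esum => a _; rewrite ge0_integralZl_EFin //.
    by rewrite integral_indic ?setIT.
  by apply/measurable_EFinP; exact: measurable_indic.
by apply/measurable_funeM/measurable_EFinP; exact: measurable_indic.
Qed.

End integral_esum.

Section random_codebook.
Local Open Scope ereal_scope.
Context {R : realType} (W U : countType) (PhiU : W -> U -> R)
  d (Omega : measurableType d) (Pr : probability Omega R) (u : W -> Omega -> U).
Hypothesis hc : random_codebook PhiU Pr u.

Lemma measurable_codeword d' (Y : measurableType d') w (F : U -> Y) :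
  measurable_fun setT (fun om => F (u w om)).
Proof. exact: measurable_fun_discrete (hc.1 w). Qed.

Lemma codeword_law w a : Pr [set om | u w om = a] = (PhiU w a)%:E.
Proof.
have := hc.2 [:: w] erefl (fun _ => a); rewrite big_seq1 => <-.
congr (Pr _); apply/seteqP; split => om /=.
  by move=> h w'; rewrite mem_seq1 => /eqP ->.
by move=> /(_ w); rewrite mem_seq1 eqxx => ->.
Qed.

Lemma codeword_pair_law w w' (p : U * U) : w != w' ->
  Pr [set om | (u w om, u w' om) = p] = (PhiU w p.1 * PhiU w' p.2)%:E.
Proof.
case: p => a b ww'; have uq : uniq [:: w; w'] by rewrite /= inE ww'.
have := hc.2 [:: w; w'] uq (fun x => if x == w then a else b).
rewrite big_cons big_seq1 eqxx eq_sym (negbTE ww') => <-.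
congr (Pr _); apply/seteqP; split => om /=.
  by move=> [<- <-] x; rewrite !inE => /orP[] /eqP ->; rewrite ?eqxx // eq_sym (negbTE ww').
move=> h; have := h w; have := h w'.
by rewrite !inE !eqxx orbT eq_sym (negbTE ww') => -> // ->.
Qed.

Lemma expectation_codeword w (F : U -> R) : (forall a, 0 <= F a)%R ->
  \int[Pr]_om (F (u w om))%:E = \esum_(a in [set: U]) (F a * PhiU w a)%:E.
Proof.
move=> F0; rewrite (integral_discrete Pr (X := u w)) //; last exact: hc.1.
by apply: eq_esum => a _; rewrite EFinM; congr (_ * _); exact: codeword_law.
Qed.

Hypothesis PhiU_ge0 : forall w a, (0 <= PhiU w a)%R.

Lemma expectation_codeword_pair w w' (F G : U -> R) : w != w' ->
  (forall a, 0 <= F a)%R -> (forall a, 0 <= G a)%R ->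
  \esum_(b in [set: U]) (G b * PhiU w' b)%:E \is a fin_num ->
  \int[Pr]_om (F (u w om) * G (u w' om))%:E =
  (\esum_(a in [set: U]) (F a * PhiU w a)%:E) *
  (\esum_(b in [set: U]) (G b * PhiU w' b)%:E).
Proof.
move=> ww' F0 G0 fin.
rewrite (integral_discrete Pr (X := fun om => (u w om, u w' om))
  (F := fun p => F p.1 * G p.2)%R).
- rewrite esumM // => [|a|b]; try by rewrite mulr_ge0.
  rewrite esumT_pair => [|p]; last by rewrite mule_ge0 ?lee_fin ?mulr_ge0.
  apply: eq_esum => a _; apply: eq_esum => b _.
  by rewrite /= mulrACA [RHS]EFinM; congr (_ * _); exact: codeword_pair_law.
- move=> p; rewrite (_ : [set om | _] =
    [set om | u w om = p.1] `&` [set om | u w' om = p.2]).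
    by apply: measurableI; exact: hc.1.
  by apply/seteqP; split => om /=; case: p => a b [] -> ->.
- by move=> p; rewrite mulr_ge0.
Qed.

End random_codebook.

Lemma abs_le_AMGM {R : realFieldType} (t k : R) : 0 < k -> `|t| <= k + t ^+ 2 / (4 * k).
Proof.
move=> k0; have k_neq0 : k != 0 by rewrite gt_eqF.
have -> : k + t ^+ 2 / (4 * k) = `|t| + (`|t| - 2 * k) ^+ 2 / (4 * k).
  by rewrite -[t ^+ 2](real_normK (num_real t)); field.
by rewrite lerDl divr_ge0 ?sqr_ge0 // mulr_ge0 // ltW.
Qed.

Section mean_abs_dev.
Local Open Scope ereal_scope.
Context {R : realType} d (Omega : measurableType d) (mu : probability Omega R).

Lemma integral_cst_prob (r : R) : \int[mu]_om r%:E = r%:E.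
Proof. by rewrite integral_cst // -[RHS]mule1; congr (_ * _); exact: probability_setT. Qed.

(* Integrate [|x - c| + (c / 2k) x <= k + (x^2 + c^2) / 4k], a rearrangement of
   [|x - c| <= k + (x - c)^2 / 4k]. *)
Lemma mean_abs_dev_le (X : Omega -> R) (c s k : R) :
  measurable_fun setT X -> (forall om, 0 <= X om)%R -> (0 <= c)%R -> (0 < k)%R ->
  \int[mu]_om (X om)%:E = c%:E ->
  \int[mu]_om (X om ^+ 2)%:E <= (s + c ^+ 2)%:E ->
  \int[mu]_om `|X om - c|%:E <= (k + s / (4 * k))%:E.
Proof.
move=> mX X0 c0 k0 EX EX2; set b := (4 * k)^-1%R.
have b0 : (0 <= b)%R by rewrite invr_ge0 mulr_ge0 // ltW.
have cb0 : (0 <= 2 * c * b)%R by rewrite !mulr_ge0.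
have mXE : measurable_fun setT (fun om => (X om)%:E) by apply/measurable_EFinP.
have mX2 : measurable_fun setT (fun om => (X om ^+ 2)%:E).
  by apply/measurable_EFinP; exact: measurable_funX.
have mA : measurable_fun setT (fun om => `|X om - c|%:E).
  apply/measurable_EFinP/measurableT_comp; first exact: normr_measurable.
  by apply: measurable_funB => //; exact: measurable_cst.
have pointwise om : (`|X om - c| + 2 * c * b * X om <= k + b * (X om ^+ 2 + c ^+ 2))%R.
  by have := abs_le_AMGM (X om - c) k0; rewrite -/b; lra.
have lhs : \int[mu]_om (`|X om - c| + 2 * c * b * X om)%:E =
    \int[mu]_om `|X om - c|%:E + (2 * c * b * c)%:E.
  under eq_integral do rewrite EFinD EFinM.
  rewrite ge0_integralD //; last 2 first.
  - by move=> om _; rewrite -EFinM lee_fin mulr_ge0.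
  - exact: measurable_funeM.
  by rewrite ge0_integralZl_EFin // ?EX ?EFinM // => om _; rewrite lee_fin.
have rhs : \int[mu]_om (k + b * (X om ^+ 2 + c ^+ 2))%:E <=
    k%:E + b%:E * ((s + c ^+ 2)%:E + (c ^+ 2)%:E).
  under eq_integral do rewrite EFinD EFinM EFinD.
  have mX2c : measurable_fun setT (fun om => (X om ^+ 2)%:E + (c ^+ 2)%:E).
    by apply: emeasurable_funD => //; exact: measurable_cst.
  have X2c0 om : 0 <= (X om ^+ 2)%:E + (c ^+ 2)%:E.
    by rewrite -EFinD lee_fin addr_ge0 ?sqr_ge0.
  rewrite ge0_integralD //; last 3 first.
  - by move=> om _; rewrite lee_fin; exact: ltW.
  - by move=> om _; apply: mule_ge0; [rewrite lee_fin | exact: X2c0].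
  - exact: measurable_funeM.
  rewrite integral_cst_prob ge0_integralZl_EFin // ge0_integralD //; last 2 first.
  - by move=> om _; rewrite lee_fin sqr_ge0.
  - by move=> om _; rewrite lee_fin sqr_ge0.
  rewrite integral_cst_prob; apply/leeD2l/lee_wpmul2l; last exact: leeD2r.
  by rewrite lee_fin.
have : \int[mu]_om `|X om - c|%:E + (2 * c * b * c)%:E <=
    k%:E + b%:E * ((s + c ^+ 2)%:E + (c ^+ 2)%:E).
  rewrite -lhs; apply: le_trans rhs; apply: ge0_le_integral => // [om _|||om _].
  - by rewrite lee_fin addr_ge0 ?mulr_ge0.
  - apply/measurable_EFinP/measurable_funD; last exact: measurable_funM.
    by apply/measurable_EFinP.
  - apply/measurable_EFinP/measurable_funD => //; apply: measurable_funM => //.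
    by apply: measurable_funD => //; exact: measurable_funX.
  - by rewrite lee_fin.
have -> : (k + s / (4 * k))%:E =
    ((k + b * ((s + c ^+ 2) + c ^+ 2))%R)%:E - (2 * c * b * c)%:E.
  by rewrite -EFinB /b; congr EFin; ring.
by rewrite leeBrDr // EFinD EFinM EFinD.
Qed.

End mean_abs_dev.

Lemma pmf_le1 {R : realType} (T : countType) (p : T -> R) t : is_pmf p -> p t <= 1.
Proof.
case=> p0 p1; rewrite -lee_fin -p1.
by apply: (le_term_esum (a := fun t => (p t)%:E)) => s; rewrite lee_fin.
Qed.

Lemma abs_sub_split_le {R : realDomainType} (pa pt qa qt : R) : 0 <= pa -> 0 <= qa ->
  `|pa + pt - (qa + qt)| <= pa + (qa + `|pt - qt|).
Proof.
move=> pa0 qa0; rewrite opprD addrACA [leRHS]addrA.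
apply: le_trans (ler_normD _ _) _; rewrite lerD2r.
by apply: le_trans (ler_normB _ _) _; rewrite !ger0_norm.
Qed.

Section typical_split.
Local Open Scope ereal_scope.
Context {R : realType} (W U V : countType) (PhiW : W -> R) (PhiU : W -> U -> R)
  (PhiV : W -> U -> V -> R) {d} {Omega : measurableType d} (Pr : probability Omega R)
  (u : W -> Omega -> U).
Hypotheses (pW : is_pmf PhiW) (pU : forall w, is_pmf (PhiU w))
  (pV : forall w x, is_pmf (PhiV w x)) (hc : random_codebook PhiU Pr u).
Variable g : R.
Hypothesis g_gt0 : (0 < g)%R.

Local Notation q := (PhiVmarg PhiW PhiU PhiV).

Let PhiW_ge0 w : (0 <= PhiW w)%R := pW.1 w.
Let PhiU_ge0 w x : (0 <= PhiU w x)%R := (pU w).1 x.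
Let PhiV_ge0 w x v : (0 <= PhiV w x v)%R := (pV w x).1 v.

Definition mass w x v : R := PhiW w * PhiV w x v.

Definition typical w x v : bool := (mass w x v <= g * q v)%R.

Definition split_mass (b : bool) w x v : R :=
  if typical w x v == b then mass w x v else 0%R.

Definition submass (f : W -> U -> V -> R) := forall w x v, (0 <= f w x v <= mass w x v)%R.

(* [fine (Pmass mass om)] is the output distribution [P_V] of the codebook [u ^~ om],
   [fine (Qmass mass)] is [Q_V], and [split_mass false], [split_mass true] are the
   atypical and typical parts of [mass]. *)
Definition Pmass (f : W -> U -> V -> R) om v := \esum_(w in [set: W]) (f w (u w om) v)%:E.

Definition Qterm (f : W -> U -> V -> R) w v :=
  \esum_(x in [set: U]) (f w x v * PhiU w x)%:E.

Definition Qmass (f : W -> U -> V -> R) v := \esum_(w in [set: W]) Qterm f w v.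

Lemma mass_ge0 w x v : (0 <= mass w x v)%R. Proof. exact: mulr_ge0. Qed.

Lemma mass_le w x v : (mass w x v <= PhiW w)%R.
Proof. by rewrite /mass ler_piMr // pmf_le1. Qed.

Lemma submass_mass : submass mass.
Proof. by move=> w x v; rewrite mass_ge0 lexx. Qed.

Lemma submass_split b : submass (split_mass b).
Proof. by move=> w x v; rewrite /split_mass; case: ifP => _; rewrite ?mass_ge0 ?lexx. Qed.

Lemma split_mass_ge0 b w x v : (0 <= split_mass b w x v)%R.
Proof. by have /andP[] := submass_split b w x v. Qed.

Lemma split_massD w x v :
  (split_mass false w x v + split_mass true w x v = mass w x v)%R.
Proof. by rewrite /split_mass; case: typical; rewrite ?addr0 ?add0r. Qed.

Lemma q_ge0 v : (0 <= q v)%R.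
Proof. by rewrite fine_ge0 // esum_ge0 // => x _; rewrite lee_fin !mulr_ge0. Qed.

Lemma split_mass_typical w x v : (split_mass true w x v <= g * q v)%R.
Proof.
rewrite /split_mass; case: ifP => [/eqP//|_].
by rewrite mulr_ge0 ?q_ge0 // ltW.
Qed.

Section submass.
Variable f : W -> U -> V -> R.
Hypothesis hf : submass f.

Let f_ge0 w x v : (0 <= f w x v)%R := (andP (hf w x v)).1.
Let f_le w x v : (f w x v <= PhiW w)%R := le_trans (andP (hf w x v)).2 (mass_le w x v).

Lemma Pmass_ge0 om v : 0 <= Pmass f om v.
Proof. by rewrite esum_ge0 // => w _; rewrite lee_fin. Qed.

Lemma Pmass_fin om v : Pmass f om v \is a fin_num.
Proof.
apply: fin_num_le (Pmass_ge0 om v) _ (_ : 1 \is a fin_num) => //.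
by rewrite -pW.2; apply: le_esum => w _; rewrite lee_fin.
Qed.

Lemma Qterm_ge0 w v : 0 <= Qterm f w v.
Proof. by rewrite esum_ge0 // => x _; rewrite lee_fin mulr_ge0. Qed.

Lemma Qterm_fin w v : Qterm f w v \is a fin_num.
Proof.
apply: fin_num_le (Qterm_ge0 w v) _ (_ : 1 \is a fin_num) => //.
rewrite -(pU w).2; apply: le_esum => x _; rewrite lee_fin ler_piMl //.
exact: le_trans (f_le w x v) (pmf_le1 w pW).
Qed.

Lemma Qmass_ge0 v : 0 <= Qmass f v.
Proof. by rewrite esum_ge0 // => w _; exact: Qterm_ge0. Qed.

Lemma measurable_Pmass v : measurable_fun setT (fun om => Pmass f om v).
Proof.
apply: measurable_fun_esum => [w|w om]; last by rewrite lee_fin.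
exact: (measurable_codeword hc w (fun x => (f w x v)%:E)).
Qed.

Lemma expectation_Pmass v : \int[Pr]_om Pmass f om v = Qmass f v.
Proof.
rewrite integral_esum => [|w|w om]; last by rewrite lee_fin.
  by apply: eq_esum => w _; exact: expectation_codeword.
exact: (measurable_codeword hc w (fun x => (f w x v)%:E)).
Qed.

End submass.

Lemma Pmass_split om v :
  Pmass mass om v = Pmass (split_mass false) om v + Pmass (split_mass true) om v.
Proof.
rewrite -esumD; last 2 first.
- by move=> w _; rewrite lee_fin split_mass_ge0.
- by move=> w _; rewrite lee_fin split_mass_ge0.
by apply: eq_esum => w _; rewrite -EFinD split_massD.
Qed.

Lemma Qmass_split v :
  Qmass mass v = Qmass (split_mass false) v + Qmass (split_mass true) v.
Proof.
rewrite -esumD; last 2 first.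
- by move=> w _; exact/Qterm_ge0/submass_split.
- by move=> w _; exact/Qterm_ge0/submass_split.
apply: eq_esum => w _; rewrite -esumD; last 2 first.
- by move=> x _; rewrite lee_fin mulr_ge0 ?split_mass_ge0.
- by move=> x _; rewrite lee_fin mulr_ge0 ?split_mass_ge0.
by apply: eq_esum => x _; rewrite -EFinD -mulrDl split_massD.
Qed.

Lemma PhiVmarg_Qmass v : q v = fine (Qmass mass v).
Proof.
rewrite /PhiVmarg esumT_pair => [|x]; last by rewrite lee_fin !mulr_ge0.
by congr fine; apply: eq_esum => w _; apply: eq_esum => x _; rewrite /mass mulrAC.
Qed.

Lemma esum_Qmass_mass : \esum_(v in [set: V]) Qmass mass v = 1.
Proof.
rewrite exchange_esum => [|v w]; last exact: Qterm_ge0 submass_mass _ _.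
rewrite -pW.2; apply: eq_esum => w _; rewrite exchange_esum => [|v x]; last first.
  by rewrite lee_fin mulr_ge0 ?mass_ge0.
transitivity (\esum_(x in [set: U]) (PhiW w * PhiU w x)%:E).
  apply: eq_esum => x _; rewrite -[RHS]mule1 -(pV w x).2 -esumZl ?mulr_ge0 //.
    by apply: eq_esum => v _; rewrite /mass -EFinM mulrAC.
  by move=> v; rewrite lee_fin.
rewrite -[RHS]mule1 -(pU w).2 -esumZl // => x.
by rewrite lee_fin.
Qed.

Lemma Qmass_fin f v : submass f -> Qmass f v \is a fin_num.
Proof.
move=> hf; apply: fin_num_le (Qmass_ge0 hf v) _ (_ : 1 \is a fin_num) => //.
rewrite -esum_Qmass_mass; apply: le_trans (le_term_esum v _) => [|v'].
  apply: le_esum => w _; apply: le_esum => x _; rewrite lee_fin ler_wpM2r //.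
  by have /andP[] := hf w x v.
exact: Qmass_ge0 submass_mass v'.
Qed.

Local Notation jointPhi := (joint PhiW PhiU PhiV).

Lemma joint_ge0 y : (0 <= jointPhi y)%R.
Proof. by rewrite /joint !mulr_ge0. Qed.

(* [i(w,u;v) - i(w) = log2 (PhiW w * PhiV(v|w,u) / q v)], so the information
   density exceeds [log2 g] exactly at the atypical triples. *)
Lemma info_gt_atypical w x v : (0 < jointPhi ((w, x), v))%R ->
  (log2 g < info_WU_V PhiW PhiU PhiV w x v - info_W PhiW w)%R = ~~ typical w x v.
Proof.
rewrite /joint /= => j0.
have [Wp Up Vp] : [/\ 0 < PhiW w, 0 < PhiU w x & 0 < PhiV w x v]%R.
  by split; rewrite lt_def ?PhiW_ge0 ?PhiU_ge0 ?PhiV_ge0 andbT;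
    apply/eqP => h; move: j0; rewrite h ?mulr0 ?mul0r ltxx.
have qp : (0 < q v)%R.
  apply: (lt_le_trans j0); rewrite PhiVmarg_Qmass -lee_fin fineK; last first.
    exact: Qmass_fin submass_mass.
  apply: le_trans (le_term_esum w _) => [|w']; last exact: Qterm_ge0 submass_mass _ _.
  apply: le_trans (le_term_esum x _) => [|x']; last by rewrite lee_fin mulr_ge0 ?mass_ge0.
  by rewrite lee_fin /mass mulrAC.
have l2 : (0 < ln (2 : R))%R by rewrite ln_gt0 // ltr1n.
rewrite /typical -ltNge /info_WU_V /info_W /log2 -mulrBl ltr_pM2r ?invr_gt0 //.
rewrite ln_div ?posrE // ln_div ?posrE ?ltr01 // ln1 sub0r opprK.
have -> : (g * q v < mass w x v)%R = (ln (g * q v) < ln (mass w x v))%R.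
  by rewrite ltr_ln ?posrE ?mulr_gt0.
by rewrite /mass !lnM ?posrE //; apply/idP/idP; lra.
Qed.

Lemma atypical_joint w x v :
  (split_mass false w x v * PhiU w x)%:E =
  (if ((w, x), v) \in [set y | (0 < jointPhi y)%R /\
      (info_WU_V PhiW PhiU PhiV y.1.1 y.1.2 y.2 - info_W PhiW y.1.1 > log2 g)%R]
   then (jointPhi ((w, x), v))%:E else 0).
Proof.
have ej : (mass w x v * PhiU w x = jointPhi ((w, x), v))%R.
  by rewrite /mass /joint /=; ring.
have [j0|] := boolP (0 < jointPhi ((w, x), v))%R; last first.
  rewrite lt_def joint_ge0 andbT negbK => /eqP jz.
  rewrite memNset /= => [|[]]; last by rewrite jz ltxx.
  by rewrite /split_mass; case: ifP => _; rewrite ?mul0r // ej jz.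
rewrite /split_mass; case: eqP => [atyp|/eqP/negPf typ].
  by rewrite ifT ?ej //; apply/mem_set; split; rewrite //= info_gt_atypical ?atyp.
rewrite mul0r memNset // => -[_ /=]; rewrite info_gt_atypical //.
by move: typ; case: typical.
Qed.

Lemma esum_Qmass_atypical :
  \esum_(v in [set: V]) Qmass (split_mass false) v = prob_info_gt PhiW PhiU PhiV (log2 g).
Proof.
have cond_ge0 y (A : set ((W * U) * V)) :
    0 <= if y \in A then (jointPhi y)%:E else 0.
  by case: ifP => // _; rewrite lee_fin joint_ge0.
rewrite /prob_info_gt [RHS]esum_mkcond esumT_pair // esumT_pair => [|p]; last first.
  by apply: esum_ge0 => v _.
rewrite [LHS]exchange_esum => [|v w]; last exact: Qterm_ge0 (submass_split false) w v.
apply: eq_esum => w _; rewrite [LHS]exchange_esum => [|v x]; last first.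
  by rewrite lee_fin mulr_ge0 ?split_mass_ge0.
by apply: eq_esum => x _; apply: eq_esum => v _; rewrite atypical_joint.
Qed.

Lemma expectation_typical_pair w w' v :
  \int[Pr]_om (split_mass true w (u w om) v * split_mass true w' (u w' om) v)%:E <=
  (if w == w' then (g * q v)%:E * Qterm (split_mass true) w v else 0) +
  Qterm (split_mass true) w v * Qterm (split_mass true) w' v.
Proof.
have t_ge0 := split_mass_ge0 true.
have [<-|ww'] := eqVneq w w'; last first.
  rewrite add0e (expectation_codeword_pair hc PhiU_ge0
    (F := fun x => split_mass true w x v) (G := fun x => split_mass true w' x v)) //.
  exact: Qterm_fin (submass_split true) w' v.
have mt : measurable_fun setT (fun om => (split_mass true w (u w om) v)%:E).
  exact: (measurable_codeword hc w (fun x => (split_mass true w x v)%:E)).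
apply: le_trans (leeDl _ _); last first.
  by rewrite mule_ge0 ?(Qterm_ge0 (submass_split true)).
apply: le_trans
  (_ : _ <= \int[Pr]_om ((g * q v)%:E * (split_mass true w (u w om) v)%:E)) _.
  apply: ge0_le_integral => //.
  - by move=> om _; rewrite lee_fin mulr_ge0.
  - by apply/measurable_EFinP/measurable_funM; apply/measurable_EFinP.
  - exact: measurable_funeM.
  - by move=> om _; rewrite -EFinM lee_fin ler_wpM2r ?split_mass_typical.
rewrite ge0_integralZl_EFin ?mulr_ge0 ?q_ge0 ?(ltW g_gt0) //; last first.
  by move=> om _; rewrite lee_fin.
by rewrite (expectation_codeword hc w (F := fun x => split_mass true w x v)).
Qed.

Lemma second_moment_typical v :
  \int[Pr]_om (Pmass (split_mass true) om v * Pmass (split_mass true) om v) <=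
  (g * q v)%:E * Qmass (split_mass true) v +
  Qmass (split_mass true) v * Qmass (split_mass true) v.
Proof.
have t_ge0 := split_mass_ge0 true.
have mt w w' : measurable_fun setT
    (fun om => (split_mass true w (u w om) v * split_mass true w' (u w' om) v)%:E).
  by apply/measurable_EFinP/measurable_funM;
    exact: (measurable_codeword hc _ (fun x => split_mass true _ x v)).
under eq_integral => om _ do rewrite /Pmass
  (esumM (f := fun w => split_mass true w (u w om) v)
         (g := fun w => split_mass true w (u w om) v))
  ?(Pmass_fin (submass_split true)) //.
have int_pair w : \int[Pr]_om (\esum_(w' in [set: W])
      (split_mass true w (u w om) v * split_mass true w' (u w' om) v)%:E) =
    \esum_(w' in [set: W]) \int[Pr]_om
      (split_mass true w (u w om) v * split_mass true w' (u w' om) v)%:E.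
  by apply: integral_esum => // w' om; rewrite lee_fin mulr_ge0.
rewrite integral_esum; last 2 first.
- by move=> w; apply: measurable_fun_esum => // w' om; rewrite lee_fin mulr_ge0.
- by move=> w om; rewrite esum_ge0 // => w' _; rewrite lee_fin mulr_ge0.
under eq_esum => w _ do rewrite int_pair.
apply: le_trans (le_esum (fun w _ => le_esum (fun w' _ =>
  expectation_typical_pair w w' v))) _.
rewrite esum_diag_prod ?mulr_ge0 ?q_ge0 ?(ltW g_gt0) //.
  by move=> w; exact: Qterm_ge0 (submass_split true) w v.
exact: Qmass_fin (submass_split true).
Qed.

Lemma mean_abs_dev_typical v (k : R) : (0 < k)%R ->
  \int[Pr]_om `|fine (Pmass (split_mass true) om v) - fine (Qmass (split_mass true) v)|%:E
  <= ((k + g / (4 * k)) * q v)%:E.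
Proof.
move=> k0; have t_sub := submass_split true.
have P_fin om := Pmass_fin t_sub om v; have Q_fin := Qmass_fin v t_sub.
have Q_ge0 : (0 <= fine (Qmass (split_mass true) v))%R by rewrite fine_ge0 ?Qmass_ge0.
have Q_le : (fine (Qmass (split_mass true) v) <= q v)%R.
  rewrite PhiVmarg_Qmass Qmass_split fineD ?Qmass_fin //; last exact: submass_split.
  by rewrite lerDr fine_ge0 ?Qmass_ge0 //; exact: submass_split.
have [q0|q_neq0] := eqVneq (q v) 0%R.
  have Q0 : fine (Qmass (split_mass true) v) = 0%R.
    by apply/eqP; rewrite eq_le Q_ge0 andbT -q0.
  have P0 om : Pmass (split_mass true) om v = 0.
    apply: esum1 => w _; congr EFin; apply/eqP; rewrite eq_le split_mass_ge0 andbT.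
    by rewrite (le_trans (split_mass_typical _ _ _)) // q0 mulr0.
  under eq_integral => om _ do rewrite P0 Q0 subr0 normr0.
  by rewrite integral0 q0 mulr0.
have qp : (0 < q v)%R by rewrite lt_def q_neq0 q_ge0.
have mP : measurable_fun setT (fun om => fine (Pmass (split_mass true) om v)).
  exact/measurableT_comp/(measurable_Pmass t_sub).
have EP : \int[Pr]_om (fine (Pmass (split_mass true) om v))%:E =
    (fine (Qmass (split_mass true) v))%:E.
  under eq_integral => om _ do rewrite fineK //.
  by rewrite expectation_Pmass // fineK.
have EP2 : \int[Pr]_om (fine (Pmass (split_mass true) om v) ^+ 2)%:E <=
    (g * q v * fine (Qmass (split_mass true) v) +
     fine (Qmass (split_mass true) v) ^+ 2)%:E.
  under eq_integral => om _ do rewrite expr2 EFinM fineK //.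
  by apply: le_trans (second_moment_typical v) _; rewrite -(fineK Q_fin) -!EFinM -EFinD.
apply: le_trans (mean_abs_dev_le mP _ Q_ge0 (mulr_gt0 k0 qp) EP EP2) _.
  by move=> om; rewrite fine_ge0 // Pmass_ge0.
rewrite lee_fin [leRHS]mulrDl lerD2l.
rewrite (_ : (_ / _ = g / (4 * k) * fine (Qmass (split_mass true) v))%R); last first.
  by field; rewrite gt_eqF.
by rewrite ler_wpM2l // divr_ge0 ?mulr_ge0 // ltW.
Qed.

Lemma measurable_Pmass_dev f v (c : R) : submass f ->
  measurable_fun setT (fun om => `|fine (Pmass f om v) - c|%:E).
Proof.
move=> hf; apply/measurable_EFinP/measurableT_comp; first exact: normr_measurable.
apply: measurable_funB; last exact: measurable_cst.
exact/measurableT_comp/(measurable_Pmass hf).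
Qed.

Definition tv_split om v := Pmass (split_mass false) om v +
  (Qmass (split_mass false) v +
   `|fine (Pmass (split_mass true) om v) - fine (Qmass (split_mass true) v)|%:E).

Lemma tv_split_ge0 om v : 0 <= tv_split om v.
Proof. by rewrite !adde_ge0 ?lee_fin ?Pmass_ge0 ?Qmass_ge0 //; exact: submass_split. Qed.

Lemma measurable_tv_split v : measurable_fun setT (tv_split ^~ v).
Proof.
apply: emeasurable_funD; first exact/measurable_Pmass/submass_split.
apply: emeasurable_funD; first exact: measurable_cst.
exact/measurable_Pmass_dev/submass_split.
Qed.

Lemma abs_Pmass_sub_q_le om v : `|fine (Pmass mass om v) - q v|%:E <= tv_split om v.
Proof.
have [a_sub t_sub] := (submass_split false, submass_split true).
rewrite /tv_split -(fineK (Pmass_fin a_sub om v)) -(fineK (Qmass_fin v a_sub)) -!EFinD.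
rewrite lee_fin Pmass_split PhiVmarg_Qmass Qmass_split !fineD ?Pmass_fin ?Qmass_fin //.
by apply: abs_sub_split_le; rewrite fine_ge0 ?Pmass_ge0 ?Qmass_ge0.
Qed.

Lemma expectation_tv_split_le v (k : R) : (0 < k)%R ->
  \int[Pr]_om tv_split om v <= Qmass (split_mass false) v +
    (Qmass (split_mass false) v + ((k + g / (4 * k)) * q v)%:E).
Proof.
move=> k0; have [a_sub t_sub] := (submass_split false, submass_split true).
rewrite ge0_integralD //; try by [move=> om _; rewrite adde_ge0 ?Qmass_ge0 |
  move=> om _; exact: Pmass_ge0 | exact: measurable_Pmass |
  apply: emeasurable_funD; [exact: measurable_cst | exact: measurable_Pmass_dev]].
rewrite expectation_Pmass //; apply: leeD2l.
rewrite ge0_integralD //; try by [move=> om _; exact: Qmass_ge0 | exact: measurable_cst |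
  exact: measurable_Pmass_dev].
rewrite -[in X in X + _](fineK (Qmass_fin v a_sub)) integral_cst_prob.
by rewrite (fineK (Qmass_fin v a_sub)); apply: leeD2l; exact: mean_abs_dev_typical.
Qed.

Lemma esum_q : \esum_(v in [set: V]) (q v)%:E = 1.
Proof.
rewrite -esum_Qmass_mass; apply: eq_esum => v _.
by rewrite PhiVmarg_Qmass fineK // (Qmass_fin v submass_mass).
Qed.

Lemma expected_tv_le (k : R) : (0 < k)%R ->
  \int[Pr]_om tv_dist (PV_code PhiW PhiV (fun w => u w om)) q <=
  (2^-1)%:E * (prob_info_gt PhiW PhiU PhiV (log2 g) +
    (prob_info_gt PhiW PhiU PhiV (log2 g) + (k + g / (4 * k))%:E)).
Proof.
move=> k0; have a_sub := submass_split false.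
have K0 : (0 <= k + g / (4 * k))%R by rewrite addr_ge0 ?divr_ge0 ?mulr_ge0 // ltW.
have tvE om : tv_dist (PV_code PhiW PhiV (fun w => u w om)) q =
    (2^-1)%:E * \esum_(v in [set: V]) `|fine (Pmass mass om v) - q v|%:E by [].
have mF : measurable_fun setT
    (fun om => \esum_(v in [set: V]) `|fine (Pmass mass om v) - q v|%:E).
  by apply: measurable_fun_esum => // v; exact/measurable_Pmass_dev/submass_mass.
under eq_integral do rewrite tvE.
rewrite ge0_integralZl_EFin ?invr_ge0 //; last by move=> om _; rewrite esum_ge0.
apply: lee_wpmul2l; first by rewrite lee_fin invr_ge0.
apply: le_trans (_ : _ <= \int[Pr]_om \esum_(v in [set: V]) tv_split om v) _.
  apply: ge0_le_integral => //; first by move=> om _; rewrite esum_ge0.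
    by apply: measurable_fun_esum => [v|v om]; [exact: measurable_tv_split | exact: tv_split_ge0].
  by move=> om _; apply: le_esum => v _; exact: abs_Pmass_sub_q_le.
rewrite integral_esum => [|v|v om]; [|exact: measurable_tv_split|exact: tv_split_ge0].
apply: le_trans (le_esum (fun v _ => expectation_tv_split_le v k0)) _.
rewrite esumD => [|v _|v _]; rewrite ?adde_ge0 ?Qmass_ge0 ?lee_fin ?mulr_ge0 ?q_ge0 //.
rewrite esumD => [|v _|v _]; rewrite ?Qmass_ge0 ?lee_fin ?mulr_ge0 ?q_ge0 //.
rewrite esum_Qmass_atypical; under eq_esum do rewrite EFinM.
by rewrite esumZl ?esum_q ?mule1 // => v; rewrite lee_fin q_ge0.
Qed.

End typical_split.

Section ereal_cvg0.
Local Open Scope ereal_scope.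
Context {R : realType}.

Lemma cvg0_eventually_le (f : nat -> \bar R) (eta : R) : (0 < eta)%R ->
  f @ \oo --> 0 -> \forall n \near \oo, f n <= eta%:E.
Proof.
move=> eta0 /fine_cvgP [f_fin /cvgrPdist_le /(_ eta eta0) f_small].
apply: filterS2 f_fin f_small => n fn; rewrite sub0r normrN -(fineK fn) lee_fin.
exact: le_trans (ler_norm _).
Qed.

Lemma cvg0_ge0_eventually_le (f : nat -> \bar R) : (forall n, 0 <= f n) ->
  (forall eta : R, (0 < eta)%R -> \forall n \near \oo, f n <= eta%:E) -> f @ \oo --> 0.
Proof.
move=> f0 f_small; have f_fin : \forall n \near \oo, f n \is a fin_num.
  apply: filterS (f_small 1%R ltr01) => n fn1.
  by rewrite ge0_fin_numE // (le_lt_trans fn1) // ltry.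
apply/fine_cvgP; split => //; apply/cvgrPdist_le => eta eta0.
apply: filterS2 f_fin (f_small eta eta0) => n fn fn_le.
by rewrite sub0r normrN ger0_norm ?fine_ge0 // -lee_fin fineK.
Qed.

End ereal_cvg0.

Theorem mainTheorem11 (R : realType)
  (W U V : nat -> countType)
  (PhiW : forall n, W n -> R)
  (PhiU : forall n, W n -> U n -> R)
  (PhiV : forall n, W n -> U n -> V n -> R)
  (d : nat -> measure_display) (Omega : forall n, measurableType (d n))
  (Pr : forall n, probability (Omega n) R)
  (u : forall n, W n -> Omega n -> U n) :
  (forall n, is_pmf (PhiW n)) ->
  (forall n w, is_pmf (PhiU n w)) ->
  (forall n w x, is_pmf (PhiV n w x)) ->
  (forall n, random_codebook (PhiU n) (Pr n) (u n)) ->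
  (forall tau : R,
     (fun n => prob_info_gt (PhiW n) (PhiU n) (PhiV n) tau) @ \oo --> 0%E) ->
  (fun n => (\int[Pr n]_om
       tv_dist (PV_code (PhiW n) (PhiV n) (fun w => u n w om))
               (PhiVmarg (PhiW n) (PhiU n) (PhiV n)))%E) @ \oo --> 0%E.
Proof.
move=> hW hU hV hc hP; apply: cvg0_ge0_eventually_le => [n|eta eta0].
  apply: integral_ge0 => om _; rewrite mule_ge0 ?lee_fin ?invr_ge0 //.
  by rewrite esum_ge0.
(* [g = eta^2/2], [k = eta/2]: the bound becomes [(eta/4 + eta/4 + eta/2 + eta/4) / 2]. *)
have g0 : 0 < eta ^+ 2 / 2 by rewrite divr_gt0 // exprn_gt0.
have k0 : 0 < eta / 2 by rewrite divr_gt0.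
have gk : eta ^+ 2 / 2 / (4 * (eta / 2)) = eta / 4 by field; rewrite gt_eqF.
apply: filterS (cvg0_eventually_le (divr_gt0 eta0 (ltr0n _ 4)) (hP (log2 (eta ^+ 2 / 2)))).
move=> n hn; have tv_le := expected_tv_le (hW n) (hU n) (hV n) (hc n) g0 k0.
apply: (le_trans tv_le).
rewrite gk; apply: (le_trans (lee_wpmul2l _ (leeD hn (leeD hn (lexx _))))).
  by rewrite lee_fin invr_ge0.
by rewrite -!EFinD -EFinM lee_fin; lra.
Qed.
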